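(* Let $\overline{G}$ be an acyclic amplified graph with finitely many vertices, and let $S$ be the set of sources of $\overline{G}$. Let $H\subseteq\bigoplus_{v\in\overline{G}^0}\mathbb{Z}$ be the monoid generated by $\{\delta_v: v\in\overline{G}^0\}\cup\{\delta_v-\sum_{e\in T}\delta_{r(e)} : v\in\overline{G}^0_{\mathrm{inf}},\ T\text{ a finite subset of }s^{-1}(v)\}$. If $(n_v)_{v\in\overline{G}^0}\in H$ satisfies $n_v\ge1$ for all $v\in S$, then there exist $(m_v)_{v\in\overline{G}^0}\in H$ with $m_v\ge1$ for all $v\in\overline{G}^0$ and a group isomorphism $\alpha\colon\bigoplus_{v\in\overline{G}^0}\mathbb{Z}\to\bigoplus_{v\in\overline{G}^0}\mathbb{Z}$ such that $\alpha(H)=H$ and $\alpha((n_v)_v)=(m_v)_v$.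
   Context: A graph $E=(E^0,E^1,r,s)$ is amplified if for every edge $e$ the number of edges from $s(e)$ to $r(e)$ is countably infinite; it is acyclic if it has no cycles. A source is a vertex $v$ with $r^{-1}(v)=\emptyset$. $\overline{G}^0_{\mathrm{inf}}$ denotes the set of infinite emitters (vertices $v$ with $s^{-1}(v)$ infinite). $\delta_v$ denotes the standard basis element at $v$. *)

From HB Require Import structures.
From mathcomp Require Import all_boot all_order all_algebra.
From Stdlib Require Import List Relations.
Set Implicit Arguments. Unset Strict Implicit. Unset Printing Implicit Defensive.
Import GRing.Theory Num.Theory.
Local Open Scope ring_scope.

Definition countably_infinite (A : Type) : Prop :=
  exists f : nat -> A, bijective f.

Definition amplified (V E1 : Type) (s r : E1 -> V) : Prop :=
  forall e : E1, countably_infinite {f : E1 | s f = s e /\ r f = r e}.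

Definition adj (V E1 : Type) (s r : E1 -> V) : V -> V -> Prop :=
  fun v w => exists e : E1, s e = v /\ r e = w.

Definition acyclic (V E1 : Type) (s r : E1 -> V) : Prop :=
  forall v : V, ~ clos_trans V (adj s r) v v.

Definition is_source (V E1 : Type) (r : E1 -> V) (v : V) : Prop :=
  forall e : E1, r e <> v.

Definition infinite_emitter (V E1 : Type) (s : E1 -> V) (v : V) : Prop :=
  forall l : list E1, exists e : E1, s e = v /\ ~ In e l.

(* standard basis element delta_v of (+)_{v in V} Z = Z^V (V finite) *)
Definition delta (V : finType) (v : V) : {ffun V -> int} :=
  [ffun w => ((w == v) : nat)%:Z].

Definition H_gen (V : finType) (E1 : Type) (s r : E1 -> V)
  (x : {ffun V -> int}) : Prop :=
  (exists v : V, x = delta v) \/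
  (exists (v : V) (T : list E1),
      infinite_emitter s v /\ NoDup T /\ (forall e, In e T -> s e = v) /\
      x = delta v - \sum_(e <- T) delta (r e)).

Inductive monoid_gen (M : nmodType) (X : M -> Prop) : M -> Prop :=
| mg0 : monoid_gen X 0
| mg_gen : forall x, X x -> monoid_gen X x
| mg_add : forall x y, monoid_gen X x -> monoid_gen X y -> monoid_gen X (x + y).

(* Elementary transvections [x |-> x + c x_v delta_w] along an edge [v -> w] are group
   automorphisms of Z^V that preserve H: since there are infinitely many edges
   [v -> w], every generator is sent to a sum of generators.  With [c = |n_w| + 1]
   such a transvection makes a coordinate [n_w <= 0] positive as soon as [n_v >= 1],
   and leaves the other coordinates unchanged.  In an acyclic graph some [w] with
   [n_w <= 0] has only predecessors [v] with [n_v >= 1], and [w] is not a source, so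
   such an edge exists; repeating this removes all nonpositive coordinates. *)

From Stdlib Require Import List Relations.
From mathcomp Require Import all_boot all_order all_algebra.
From mathcomp Require Import boolp zify ring.
Import GRing.Theory Num.Theory.
Local Open Scope ring_scope.

Lemma count_gt0_In (T : Type) (p : pred T) (l : list T) :
  (0 < count p l)%N -> exists2 x, In x l & p x.
Proof.
elim: l => [|x l IHl] //=; case: (boolP (p x)) => [px _|_ /IHl [y ly py]].
  by exists x; [left|].
by exists y; [right|].
Qed.

Lemma In_count_gt0 (T : Type) (p : pred T) (l : list T) (x : T) :
  In x l -> p x -> (0 < count p l)%N.
Proof.
elim: l => [|y l IHl] //= [<- -> //|lx px].
by have := IHl lx px; lia.
Qed.

Lemma injective_NoDup_map_seq (T : Type) (g : nat -> T) (a n : nat) :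
  injective g -> NoDup (List.map g (List.seq a n)).
Proof.
move=> inj_g; elim: n a => [|n IHn] a /=; first by constructor.
constructor; last exact: IHn.
by move=> /in_map_iff [i [/inj_g -> /in_seq]]; lia.
Qed.

Lemma sum_delta_count (V : finType) (E1 : Type) (f : E1 -> V) (T : list E1) (u : V) :
  (\sum_(e <- T) delta (f e)) u = (count (fun e => f e == u) T)%:Z.
Proof.
elim: T => [|e T IHT]; first by rewrite big_nil ffunE.
by rewrite big_cons ffunE IHT ffunE /= eq_sym; case: (f e == u) => /=; lia.
Qed.

Lemma acyclic_minimal (T : finType) (R : relation T) (B : {set T}) (w0 : T) :
  (forall x, ~ clos_trans T R x x) -> w0 \in B ->
  exists2 w, w \in B & forall u, R u w -> u \notin B.
Proof.
move=> acyc Bw0; pose anc w := [set u | `[< clos_trans T R u w >]].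
have [w Bw wmin] := arg_minnP (fun w => #|anc w|) Bw0.
exists w => // u Ruw; apply/negP => Bu.
have : anc u \proper anc w.
  apply/properP; split.
    apply/subsetP => x; rewrite !inE => /asboolP Rxu; apply/asboolP.
    exact: t_trans Rxu (t_step _ _ _ _ Ruw).
  by exists u; rewrite inE; apply/asboolP; [apply: t_step | apply: acyc].
by move=> /proper_card; have := wmin u Bu; lia.
Qed.

Section AmplifiedGraph.
Variables (V : finType) (E1 : Type) (s r : E1 -> V).

Local Notation inH := (monoid_gen (H_gen s r)).

(* [emitter_vec v k] is the generator [delta v - \sum_(e <- T) delta (r e)], recorded
   through the number [k w] of edges of [T] ending at each vertex [w]. *)
Definition emitter_vec (v : V) (k : V -> nat) : {ffun V -> int} :=
  [ffun u => ((u == v) : nat)%:Z - (k u)%:Z].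

Definition admissible (v : V) (k : V -> nat) : Prop :=
  infinite_emitter s v /\ forall w, (0 < k w)%N -> adj s r v w.

Lemma inH_delta (v : V) : inH (delta v).
Proof. by apply: mg_gen; left; exists v. Qed.

Lemma inH_mulrn (x : {ffun V -> int}) (n : nat) : inH x -> inH (x *+ n).
Proof.
move=> Hx; elim: n => [|n IHn]; first by rewrite mulr0n; apply: mg0.
by rewrite mulrS; apply: mg_add.
Qed.

Lemma inH_ind (P : {ffun V -> int} -> Prop) :
  P 0 -> (forall x y, P x -> P y -> P (x + y)) -> (forall v, P (delta v)) ->
  (forall v k, admissible v k -> P (emitter_vec v k)) ->
  forall x, inH x -> P x.
Proof.
move=> P0 PD Pdelta Pemit x; elim=> [|y Hy|y z _ Py _ Pz] //; last exact: PD.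
case: Hy => [[v ->]|[v [T [infv [_ [sT ->]]]]]] //.
have -> : delta v - \sum_(e <- T) delta (r e) =
          emitter_vec v (fun u => count (fun e => r e == u) T).
  by apply/ffunP => u; rewrite !ffunE sum_delta_count.
apply: Pemit; split => // w /count_gt0_In [e Te /eqP <-].
by exists e; split; [apply: sT|].
Qed.

Section AcyclicAmplified.
Hypotheses (acyc : acyclic s r) (ampl : amplified s r).

Lemma adj_neq {v w : V} : adj s r v w -> v <> w.
Proof. by move=> vw vw_eq; subst; apply: (acyc w); apply: t_step. Qed.

Lemma admissible_self {v : V} {k : V -> nat} : admissible v k -> k v = 0%N.
Proof. by move=> [_ kv]; case: (posnP (k v)) => // /kv /adj_neq. Qed.

Lemma parallel_edges {v w : V} : adj s r v w ->
  exists g : nat -> E1, injective g /\ forall i, s (g i) = v /\ r (g i) = w.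
Proof.
move=> [e [<- <-]]; have [f [f' fK f'K]] := ampl e.
exists (fun i => sval (f i)); split; last by move=> i; case: (f i).
move=> i j /= fij; rewrite -(fK i) -(fK j); congr f'.
apply: eq_sig_hprop fij => x [p1 p2] [q1 q2].
by rewrite (eq_irrelevance p1 q1) (eq_irrelevance p2 q2).
Qed.

Lemma adj_infinite_emitter {v w : V} : adj s r v w -> infinite_emitter s v.
Proof.
move=> /parallel_edges [g [inj_g sg]] l; apply: contrapT => none_out.
have in_l e : s e = v -> In e l.
  by move=> se; apply: contrapT => nle; apply: none_out; exists e.
have := NoDup_incl_length (@injective_NoDup_map_seq _ g 0%N (length l).+1 inj_g).
rewrite length_map length_seq => le_len.
suff : ((length l).+1 <= length l)%coq_nat by lia.
by apply: le_len => _ /in_map_iff [i [<- _]]; apply: in_l; case: (sg i).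
Qed.

Lemma edge_list_with_multiplicities (v : V) (k : V -> nat) (ws : seq V) :
  (forall w, (0 < k w)%N -> adj s r v w) -> uniq ws ->
  exists T : list E1, [/\ NoDup T, forall e, In e T -> s e = v &
    forall u, count (fun e => r e == u) T = if u \in ws then k u else 0%N].
Proof.
move=> kv; elim: ws => [|w ws IHws] /=.
  by move=> _; exists nil; split => //; constructor.
move=> /andP [wNws /IHws [T [NDT sT cT]]].
case: (posnP (k w)) => [kw0|/kv/parallel_edges [g [inj_g sg]]].
  exists T; split => // u; rewrite cT inE.
  by case: (u =P w) => [->|] //=; rewrite (negbTE wNws) kw0.
have count_g u m a : count (fun e => r e == u) (List.map g (List.seq a m)) =
                     if w == u then m else 0%N.
  elim: m a => [|m IHm] a /=; first by case: (w == u).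
  by rewrite IHm (sg a).2; case: (w == u) => /=; lia.
exists (List.map g (List.seq 0%N (k w)) ++ T); split.
- apply: NoDup_app => //; first exact: injective_NoDup_map_seq.
  move=> _ /in_map_iff [i [<- _]] /(@In_count_gt0 _ (fun e => r e == w)).
  by rewrite (sg i).2 eqxx cT (negbTE wNws) => /(_ isT).
- by move=> e /in_app_iff [/in_map_iff [i [<- _]]|/sT] //; case: (sg i).
- move=> u; rewrite count_cat count_g cT inE eq_sym.
  by case: (u =P w) => [->|_] /=; rewrite ?(negbTE wNws) ?addn0.
Qed.

Lemma emitter_vec_inH {v : V} {k : V -> nat} : admissible v k -> inH (emitter_vec v k).
Proof.
move=> [infv kv]; have [T [NDT sT cT]] :=
  @edge_list_with_multiplicities v k (enum V) kv (enum_uniq V).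
apply: mg_gen; right; exists v, T; split; [exact: infv | split => //; split => //].
by apply/ffunP => u; rewrite !ffunE sum_delta_count cT mem_enum.
Qed.

Definition transvection (w v : V) (c : int) (x : {ffun V -> int}) : {ffun V -> int} :=
  [ffun u => x u + (if u == w then c * x v else 0)].

Ltac solve_pointwise := repeat (rewrite ?eqxx; match goal with
  |- context [?a == ?b] => case: (a =P b) => ?; try subst end);
  try (exfalso; congruence); simpl; nia.

Lemma transvectionD (w v : V) (c : int) : {morph transvection w v c : x y / x + y}.
Proof. by move=> x y; apply/ffunP => u; rewrite !ffunE; case: (u == w); ring. Qed.

Lemma transvection0 (w v : V) (c : int) : transvection w v c 0 = 0.
Proof. by apply/ffunP => u; rewrite !ffunE; case: (u == w); ring. Qed.

Lemma transvection_neq (w v : V) (c : int) x u : u != w -> transvection w v c x u = x u.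
Proof. by move=> /negbTE uw; rewrite ffunE uw addr0. Qed.

Lemma transvection_delta (w v : V) (c : int) u : u <> v -> transvection w v c (delta u) = delta u.
Proof. by move=> uv; apply/ffunP => z; rewrite !ffunE; solve_pointwise. Qed.

Lemma transvectionK (w v : V) (c : int) :
  v <> w -> cancel (transvection w v c) (transvection w v (- c)).
Proof. by move=> vw x; apply/ffunP => z; rewrite !ffunE; solve_pointwise. Qed.

Lemma transvection_inH {w v : V} (c : nat) (x : {ffun V -> int}) :
  adj s r v w -> inH x -> inH (transvection w v c%:Z x).
Proof.
move=> vw; have infv := adj_infinite_emitter vw.
move: x; apply: inH_ind.
- by rewrite transvection0; apply: mg0.
- by move=> x y Hx Hy; rewrite transvectionD; apply: mg_add.
- move=> u; case: (u =P v) => [->|uv]; last by rewrite transvection_delta //; apply: inH_delta.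
  have -> : transvection w v c%:Z (delta v) = delta v + delta w *+ c.
    by apply/ffunP => z; rewrite !ffunE ffunMnE !ffunE; solve_pointwise.
  by apply: mg_add; [apply: inH_delta | apply/inH_mulrn/inH_delta].
- move=> u k admk; case: (u =P v) => [uv|uv].
    subst u; have kv0 := admissible_self admk.
    have -> : transvection w v c%:Z (emitter_vec v k) = emitter_vec v k + delta w *+ c.
      by apply/ffunP => z; rewrite !ffunE ffunMnE !ffunE kv0; solve_pointwise.
    by apply: mg_add; [apply: emitter_vec_inH | apply/inH_mulrn/inH_delta].
  (* the edges of [u] into [v] are rerouted through [v -> w] *)
  pose k' z := (k z + (if z == v then c * k v else 0))%N.
  have -> : transvection w v c%:Z (emitter_vec u k) =
            emitter_vec u k' + emitter_vec v (fun z => (z == w : nat)) *+ (c * k v).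
    by apply/ffunP => z; rewrite !ffunE ffunMnE !ffunE /k'; solve_pointwise.
  apply: mg_add; last by apply/inH_mulrn/emitter_vec_inH; split => // z; case: eqP => [->|].
  apply: emitter_vec_inH; split; first exact: admk.1.
  move=> z; rewrite /k'; case: (z =P v) => [->|_]; last by rewrite addn0 => /admk.2.
  by case: (posnP (k v)) => [->|/admk.2] //; rewrite muln0.
Qed.

Lemma transvection_inH_opp {w v : V} (c : nat) (x : {ffun V -> int}) :
  adj s r v w -> inH x -> inH (transvection w v (- c%:Z) x).
Proof.
move=> vw; have infv := adj_infinite_emitter vw.
move: x; apply: inH_ind.
- by rewrite transvection0; apply: mg0.
- by move=> x y Hx Hy; rewrite transvectionD; apply: mg_add.
- move=> u; case: (u =P v) => [->|uv]; last by rewrite transvection_delta //; apply: inH_delta.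
  have -> : transvection w v (- c%:Z) (delta v) = emitter_vec v (fun z => if z == w then c else 0%N).
    by apply/ffunP => z; rewrite !ffunE; solve_pointwise.
  by apply: emitter_vec_inH; split => // z; case: eqP => [->|].
- move=> u k admk; case: (u =P v) => [uv|uv].
    subst u; have kv0 := admissible_self admk.
    have -> : transvection w v (- c%:Z) (emitter_vec v k) =
              emitter_vec v (fun z => k z + (if z == w then c else 0))%N.
      by apply/ffunP => z; rewrite !ffunE kv0; solve_pointwise.
    apply: emitter_vec_inH; split => // z; case: (z =P w) => [->|_] //.
    by rewrite addn0 => /admk.2.
  (* the [c * k v] extra edges towards [w] are taken from those already in [k], any
     shortfall being made up by copies of [delta w] *)
  pose k' z := if z == w then (k w - c * k v)%N else k z.
  have -> : transvection w v (- c%:Z) (emitter_vec u k) =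
            emitter_vec u k' + delta w *+ (c * k v - k w).
    by apply/ffunP => z; rewrite !ffunE ffunMnE !ffunE /k'; solve_pointwise.
  apply: mg_add; last exact/inH_mulrn/inH_delta.
  apply: emitter_vec_inH; split; first exact: admk.1.
  move=> z; rewrite /k'; case: (z =P w) => [->|_]; last exact: admk.2.
  by move=> pos; apply: admk.2; lia.
Qed.

Definition H_automorphism (alpha : {ffun V -> int} -> {ffun V -> int}) : Prop :=
  [/\ {morph alpha : x y / x + y}, bijective alpha,
      forall x, inH x -> inH (alpha x) &
      forall y, inH y -> exists x, inH x /\ alpha x = y].

Lemma H_automorphism_id : H_automorphism id.
Proof. by split => // [|y Hy]; [exists id | exists y]. Qed.

Lemma H_automorphism_comp alpha beta :
  H_automorphism alpha -> H_automorphism beta -> H_automorphism (beta \o alpha).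
Proof.
move=> [aD abij aH Ha] [bD bbij bH Hb]; split.
- by move=> x y /=; rewrite aD bD.
- exact: bij_comp.
- by move=> x Hx; apply/bH/aH.
- move=> y /Hb [x1 [Hx1 <-]]; have [x [Hx <-]] := Ha x1 Hx1.
  by exists x.
Qed.

Lemma H_automorphism_transvection {w v : V} (c : nat) :
  adj s r v w -> H_automorphism (transvection w v c%:Z).
Proof.
move=> vw; have vNw := adj_neq vw.
have cK := transvectionK w v (- c%:Z) vNw; rewrite opprK in cK.
split; first exact: transvectionD.
- by exists (transvection w v (- c%:Z)); [apply: transvectionK|].
- by move=> x; apply: transvection_inH.
- move=> y Hy; exists (transvection w v (- c%:Z) y).
  by split; [apply: transvection_inH_opp | apply: cK].
Qed.

Lemma positive_H_automorphism_by_count (N : nat) (n : {ffun V -> int}) :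
  inH n -> (forall v, is_source r v -> 1 <= n v) -> (#|[set u | (n u <= 0)%R]| <= N)%N ->
  exists2 alpha, H_automorphism alpha & forall v, 1 <= alpha n v.
Proof.
elim: N n => [|N IHN] n Hn n_src card_bad;
  case: (set_0Vmem [set u | n u <= 0]) => [bad0|[w0 bad_w0]].
1,3: exists id => [|v]; first exact: H_automorphism_id.
1,2: have : v \notin [set u | n u <= 0] by rewrite bad0 inE.
1,2: by rewrite inE => /negP; lia.
  by move: card_bad; rewrite leqn0 => /eqP/cards0_eq bad0; rewrite bad0 inE in bad_w0.
have [w bad_w w_min] := @acyclic_minimal V (adj s r) _ _ acyc bad_w0.
have nw : n w <= 0 by move: bad_w; rewrite inE.
have [e ew] : exists e, r e = w by apply/not_existsP => /n_src; lia.
set v := s e; have vw : adj s r v w by exists e.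
have nv : 1 <= n v by have := w_min _ vw; rewrite inE => /negP; lia.
pose n' := transvection w v (`|n w| + 1)%N%:Z n.
have n'_neq u : u != w -> n' u = n u by apply: transvection_neq.
have n'_w : 1 <= n' w by rewrite ffunE eqxx; nia.
have [alpha Halpha alpha_pos] : exists2 alpha, H_automorphism alpha & forall u, 1 <= alpha n' u.
  apply: IHN; first exact: transvection_inH.
    by move=> u /n_src; case: (u =P w) => [->|/eqP /n'_neq ->].
  rewrite -ltnS; apply: leq_trans card_bad; rewrite [X in (_ < X)%N](cardsD1 w) bad_w ltnS.
  apply/subset_leq_card/subsetP => u; rewrite !inE.
  by case: (u =P w) => [->|/eqP uw] /=; [lia | rewrite n'_neq].
exists (alpha \o transvection w v (`|n w| + 1)%N%:Z) => //.
exact: H_automorphism_comp (H_automorphism_transvection _ vw) Halpha.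
Qed.

End AcyclicAmplified.
End AmplifiedGraph.

Theorem lemma3p9 (V : finType) (E1 : Type) (s r : E1 -> V)
  (Hacyc : acyclic s r) (Hampl : amplified s r)
  (n : {ffun V -> int})
  (HnH : monoid_gen (H_gen s r) n)
  (Hn : forall v : V, is_source r v -> 1 <= n v) :
  exists (m : {ffun V -> int}) (alpha : {ffun V -> int} -> {ffun V -> int}),
    monoid_gen (H_gen s r) m /\
    (forall v : V, 1 <= m v) /\
    (forall x y, alpha (x + y) = alpha x + alpha y) /\
    bijective alpha /\
    (forall x, monoid_gen (H_gen s r) x -> monoid_gen (H_gen s r) (alpha x)) /\
    (forall y, monoid_gen (H_gen s r) y ->
       exists x, monoid_gen (H_gen s r) x /\ alpha x = y) /\
    alpha n = m.
Proof.
have [alpha [alphaD alpha_bij alphaH Halpha] alpha_pos] :=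
  @positive_H_automorphism_by_count V E1 s r Hacyc Hampl _ n HnH Hn (leqnn _).
by exists (alpha n), alpha; do !split => //; apply: alphaH.
Qed.
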